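(* Let $V$ be a simple unitary vertex operator algebra, let $b\in V$ satisfy energy bounds and let $a\in V$ be a primary vector of conformal dimension $d_a\neq 1$. Then there are real numbers $B\geq 0$ and $t\geq 0$ such that $$\|a_{-m}b_m\|_n\leq B(1+|m|)^t(1+|n|)^t\big(\|a_0\|_{n-m}+\|a_0\|_n\big)$$ for all $m,n\in\mathbb{Z}$.
   Context: A simple unitary vertex operator algebra is a vertex operator algebra $V$ (over $\mathbb{C}$) of CFT type, i.e. $V=\bigoplus_{n\geq 0}V_n$ with $V_n=\ker(L_0-n1_V)$ and $V_0=\mathbb{C}\Omega$, with vacuum $\Omega$ and conformal vector $\nu$, $Y(\nu,z)=\sum_{n}L_nz^{-n-2}$, equipped with a scalar product $(\cdot|\cdot)$ with $(\Omega|\Omega)=1$ and an antilinear involution $a\mapsto a^*$ with $\nu^*=\nu$ such that $(b|a_nc)=(a^*_{-n}b|c)$ for all $a,b,c\in V$, $n\in\mathbb{Z}$. For $a\in V$ the modes $a_n$ are defined by $Y(z^{L_0}a,z)=\sum_{n}a_nz^{-n}$. A vector $a$ is primary of conformal dimension $d$ if $a\in V_d$ and $L_ka=0$ for all $k>0$. Write $\|a\|=\sqrt{(a|a)}$, $V_{\leq n}=\bigoplus_{k\leq n}V_k$ (so $V_{\leq n}=\{0\}$ for $n<0$), $\|R\|_n:=\sup\{\|Rb\|: b\in V_{\leq n},\|b\|\leq 1\}\in[0,+\infty]$. A vector $b$ satisfies energy bounds if there are real $s,C,t\geq0$ with $\|b_m\|_n\leq C(1+|m|)^t(1+|n|)^s$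 for all $m,n\in\mathbb{Z}$. *)

From HB Require Import structures.
From mathcomp Require Import all_boot all_order all_algebra.
From mathcomp Require Import all_classical all_reals all_analysis.
From mathcomp Require Import complex.
From Stdlib Require Import ClassicalEpsilon.

Set Implicit Arguments.
Unset Strict Implicit.
Unset Printing Implicit Defensive.

Import Order.TTheory GRing.Theory Num.Theory.
Local Open Scope ring_scope.
Local Open Scope classical_set_scope.

(* Data of a (candidate) unitary vertex operator algebra over C = R[i]:     *)
(*   Y    : Y a n c = a_(n) c, the STANDARD modes, Y(a,z) = sum a_(n)z^{-n-1}*)
(*   vac  : vacuum Omega,  nu : conformal vector                            *)
(*   sp   : scalar product (antilinear in 1st, linear in 2nd argument)      *)
(*   star : the antilinear involution a |-> a^*                             *)
(* L_n = nu_(n+1); in particular L_0 = nu_(1), L_{-1} = nu_(0).             *)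

Section VOA.
Variable R : realType.
Local Notation C := (R[i]).
Variable V : lmodType C.
Variable Y : V -> int -> V -> V.
Variables vac nu : V.

Definition Lvir (n : int) : V -> V := Y nu (n + 1).

Definition binomz (r : int) (i : nat) : C :=
  (\prod_(j < i) ((r - (j : nat)%:Z)%:~R : C)) / (i`!)%:R.

Definition gdecomp (a : V) (N : nat) (f : nat -> V) : Prop :=
  (forall j : nat, Y nu 1 (f j) = (j%:R : C) *: f j) /\ a = \sum_(j < N) f j.

(* a in V_{<= n} = \bigoplus_{k <= n} V_k (= {0} if n < 0) *)
Definition Vle (n : int) (a : V) : Prop :=
  exists N f, gdecomp a N f /\ forall j : nat, n < (j : int) -> f j = 0.

(* The modes of the paper, Y(z^{L_0} a, z) = \sum_n a_n z^{-n}: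
   for a in V_k, a_n = a_(n+k-1); extended linearly in a (the homogeneous
   decomposition is unique, so this choice is well-defined). *)
Definition pmode (a : V) (n : int) (c : V) : V :=
  epsilon (inhabits (0 : V)) (fun x => exists N f, gdecomp a N f /\
     x = \sum_(j < N) Y (f j) (n + (j : int) - 1) c).

Variable sp : V -> V -> C.
Variable star : V -> V.

Definition vnorm (x : V) : R := Num.sqrt (complex.Re (sp x x)).

Definition opnorm (T : V -> V) (n : int) : \bar R :=
  ereal_sup [set (vnorm (T b))%:E | b in [set b | Vle n b /\ vnorm b <= 1]].

Definition primary (d : nat) (a : V) : Prop :=
  Y nu 1 a = (d%:R : C) *: a /\ forall k : nat, (0 < k)%N -> Lvir k a = 0.

Definition energy_bounded (b : V) : Prop :=
  exists s Cst t : R, 0 <= s /\ 0 <= Cst /\ 0 <= t /\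
    forall m n : int,
      (opnorm (pmode b m) n <=
       (Cst * (1 + (`|m|%:~R : R)) `^ t * (1 + (`|n|%:~R : R)) `^ s)%:E)%E.

Definition is_VOA_CFT : Prop :=
  (forall a n (k : C) x y, Y a n (k *: x + y) = k *: Y a n x + Y a n y) /\
      (forall n c (k : C) a b, Y (k *: a + b) n c = k *: Y a n c + Y b n c
      ) /\
      (forall a b, exists N : int, forall n, N <= n -> Y a n b = 0
      ) /\
      (forall n c, Y vac n c = if n == -1 then c else 0
      ) /\
      (forall a, Y a (-1) vac = a /\ forall n, 0 <= n -> Y a n vac = 0
      ) /\
      (* Borcherds identity (all sums are finite by truncation) *)
      (forall a b c (p q r : int), exists N : nat, forall M : nat, (N <= M)%N ->
         \sum_(i < M) binomz p i *: Y (Y a (r + (i : nat)%:Z) b) (p + q - (i : nat)%:Z) c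
         = \sum_(i < M) ((-1) ^+ i * binomz r i) *:
              (Y a (p + r - (i : nat)%:Z) (Y b (q + (i : nat)%:Z) c)
               - (-1) ^ r *: Y b (q + r - (i : nat)%:Z) (Y a (p + (i : nat)%:Z) c))
      ) /\
      (exists cc : C, forall (m n : int) v,
         Lvir m (Lvir n v) - Lvir n (Lvir m v) =
         (m - n)%:~R *: Lvir (m + n) v
         + (if m + n == 0 then cc / 12%:R * (m ^+ 3 - m)%:~R else 0) *: v
      ) /\
      (forall a n, Y (Lvir (-1) a) n = fun c => - (n%:~R : C) *: Y a (n - 1) c
      ) /\
      (* V = \bigoplus_{n >= 0} V_n, V_n = ker (L_0 - n) *)
          (forall a, exists N f, gdecomp a N f
      ) /\
          (* each V_n is finite-dimensional *)
          (forall n : nat, exists (k : nat) (e : 'I_k -> V), forall v,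
             Y nu 1 v = (n%:R : C) *: v ->
             exists cf : 'I_k -> C, v = \sum_(i < k) cf i *: e i
      ) /\
          (forall v, Y nu 1 v = 0 -> exists k : C, v = k *: vac).

Definition is_simple : Prop :=
  forall I : V -> Prop,
    I 0 -> (forall x y, I x -> I y -> I (x + y)) ->
    (forall (k : C) x, I x -> I (k *: x)) ->
    (forall a n x, I x -> I (Y a n x)) ->
    (forall x, I x -> x = 0) \/ (forall x, I x).

Definition is_unitary : Prop :=
  (forall x y z (k : C), sp x (k *: y + z) = k * sp x y + sp x z ) /\
      (forall x y, sp y x = conjc (sp x y) ) /\
      (forall x, x != 0 -> 0 < sp x x ) /\
      sp vac vac = 1 /\
      (forall x y (k : C), star (k *: x + y) = conjc k *: star x + star y ) /\
      (forall x, star (star x) = x ) /\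
      star nu = nu /\
      (forall a b c n, sp b (pmode a n c) = sp (pmode (star a) (- n) b) c).

Definition simple_unitary_VOA : Prop :=
  [/\ is_VOA_CFT, is_simple & is_unitary].

End VOA.

From HB Require Import structures.
From mathcomp Require Import all_boot all_order all_algebra.
From mathcomp Require Import all_classical all_reals all_analysis.
From mathcomp Require Import complex.
From Stdlib Require Import ClassicalEpsilon.
From mathcomp Require Import ring lra.

(* For a primary [a] of weight [d], the Borcherds identity gives the commutator
   [[L_{-m}, a_0] = m (1 - d) a_{-m}], so for [d <> 1] the mode [a_{-m}] is a
   combination of [L_{-m} a_0] and [a_0 L_{-m}].  Unitarity and the Virasoro
   relations give [||L_{-m} v||^2 = ||L_m v||^2 + (2mk + c/12 (m^3 - m)) ||v||^2]
   on [V_k], with [c = 2 ||nu||^2 >= 0]; by induction on the weight this bounds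
   [L_m] on [V_{<= k}] polynomially in [k] and [m].  Since [b_m] maps [V_{<= n}]
   into [V_{<= n - m}] with the norm allowed by the energy bounds, this bounds
   [||a_{-m} b_m||_n] by the norms of [a_0] on [V_{<= n - m}] and [V_{<= n}]. *)

Set Implicit Arguments.
Unset Strict Implicit.
Unset Printing Implicit Defensive.
Import Order.TTheory GRing.Theory Num.Theory.
Local Open Scope ring_scope.

Section PowerBounds.
Variable R : realType.

Lemma powR_mul_expr_le (x t T : R) (k : nat) :
  1 <= x -> 0 <= t -> t + k%:R <= T -> x `^ t * x ^+ k <= x `^ T.
Proof.
move=> x_ge1 t_ge0 tk_le_T; have x_ge0 : 0 <= x by apply: le_trans x_ge1.
have x_neq0 : x != 0 by rewrite gt_eqF // (lt_le_trans ltr01).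
rewrite -powR_mulrn // -powRD ?x_neq0 ?implybT //.
exact: ler_powR.
Qed.

Lemma mul_powR_cube_le (K c t s u v w : R) :
  0 <= K -> 0 <= c -> 0 <= t -> 0 <= s -> 0 <= u -> 0 <= v -> 0 <= w ->
  w <= u + v ->
  K * (1 + v) `^ t * (1 + u) `^ s * ((4 + c) * (w + v + 1) ^+ 3) <=
  K * (4 + c) * 8 * (1 + v) `^ (t + s + 3) * (1 + u) `^ (t + s + 3).
Proof.
move=> K0 c0 t0 s0 u0 v0 w0 wuv.
set T := t + s + 3; set Pv := (1 + v) `^ t; set Pu := (1 + u) `^ s.
have Pv0 : 0 <= Pv by apply: powR_ge0.
have Pu0 : 0 <= Pu by apply: powR_ge0.
have Kc0 : 0 <= K * (4 + c) by rewrite mulr_ge0 //; lra.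
have cube : (w + v + 1) ^+ 3 <= 8 * ((1 + v) ^+ 3 * (1 + u) ^+ 3).
  have -> : 8 * ((1 + v) ^+ 3 * (1 + u) ^+ 3) = (2 * ((1 + v) * (1 + u))) ^+ 3
    by ring.
  by rewrite lerXn2r ?nnegrE //; nra.
have Tv : Pv * (1 + v) ^+ 3 <= (1 + v) `^ T by apply: powR_mul_expr_le; rewrite /T; lra.
have Tu : Pu * (1 + u) ^+ 3 <= (1 + u) `^ T by apply: powR_mul_expr_le; rewrite /T; lra.
apply: (@le_trans _ _ (K * (4 + c) * 8 * (Pv * (1 + v) ^+ 3) * (Pu * (1 + u) ^+ 3))).
  have -> : K * Pv * Pu * ((4 + c) * (w + v + 1) ^+ 3) =
            K * (4 + c) * (Pv * Pu) * (w + v + 1) ^+ 3 by ring.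
  have -> : K * (4 + c) * 8 * (Pv * (1 + v) ^+ 3) * (Pu * (1 + u) ^+ 3) =
            K * (4 + c) * (Pv * Pu) * (8 * ((1 + v) ^+ 3 * (1 + u) ^+ 3)) by ring.
  by apply: ler_wpM2l; first exact: mulr_ge0 Kc0 (mulr_ge0 Pv0 Pu0).
have v3 : 0 <= Pv * (1 + v) ^+ 3 by rewrite mulr_ge0 // exprn_ge0 //; lra.
have u3 : 0 <= Pu * (1 + u) ^+ 3 by rewrite mulr_ge0 // exprn_ge0 //; lra.
have K8 : 0 <= K * (4 + c) * 8 by rewrite mulr_ge0.
apply: ler_pM Tu => //; first exact: mulr_ge0 K8 v3.
by apply: ler_wpM2l.
Qed.

Lemma le_mul_sq_of_le_mul (s a b g : R) : 0 <= s -> 0 <= a -> 0 <= g ->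
  s <= a * b -> b ^+ 2 <= g * s -> s <= g * a ^+ 2.
Proof.
move=> s0 a0 g0 sab bgs; have [->|s_neq0] := eqVneq s 0; first by rewrite mulr_ge0 ?exprn_ge0.
have s_pos : 0 < s by rewrite lt_def s_neq0 s0.
rewrite -(ler_pM2r s_pos); apply: le_trans (_ : (a * b) ^+ 2 <= _).
  by rewrite expr2 ler_pM.
by rewrite exprMn; have := ler_wpM2l (exprn_ge0 2 a0) bgs; nra.
Qed.

End PowerBounds.

Section SumFirstTerms.
Variable U : nmodType.

Lemma big_ord_first1 (F : nat -> U) n :
  (forall i, (1 <= i)%N -> F i = 0) -> \sum_(i < n.+1) F i = F 0%N.
Proof. by move=> F0; rewrite big_ord_recl big1 ?addr0 // => i _; apply: F0. Qed.

Lemma big_ord_first2 (F : nat -> U) n :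
  (forall i, (2 <= i)%N -> F i = 0) -> \sum_(i < n.+2) F i = F 0%N + F 1%N.
Proof.
by move=> F0; rewrite !big_ord_recl big1 ?addr0 ?addrA // => i _; apply: F0.
Qed.

End SumFirstTerms.

Lemma binomz0 (R : realType) (p : int) : binomz R p 0 = 1.
Proof. by rewrite /binomz big_ord0 divr1. Qed.

Lemma binomz1 (R : realType) (p : int) : binomz R p 1 = p%:~R.
Proof. by rewrite /binomz big_ord1 subr0 divr1. Qed.

Lemma binomz_small (R : realType) (k i : nat) : (k < i)%N -> binomz R k i = 0.
Proof. by move=> ki; rewrite /binomz (bigD1 (Ordinal ki)) //= subrr !mul0r. Qed.

Section InnerProduct.
Variable R : realType.
Local Notation C := R[i].
Variable V : lmodType C.
Variable sp : V -> V -> C.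

Definition inner_product : Prop :=
  [/\ forall x y z (k : C), sp x (k *: y + z) = k * sp x y + sp x z,
      forall x y, sp y x = conjc (sp x y)
    & forall x, x != 0 -> 0 < sp x x].

Hypothesis sp_ip : inner_product.
Let sp_linear := let: And3 lin _ _ := sp_ip in lin.
Let sp_conj := let: And3 _ cj _ := sp_ip in cj.
Let sp_pos := let: And3 _ _ pos := sp_ip in pos.
Local Open Scope complex_scope.

Definition sp_right x : {linear V -> C | *%R} :=
  HB.pack (sp x) (GRing.isLinear.Build _ _ _ _ _ (fun k y z => sp_linear x y z k)).

Lemma sp0r x : sp x 0 = 0.
Proof. exact: linear0 (sp_right x). Qed.

Lemma spDr x y z : sp x (y + z) = sp x y + sp x z.
Proof. exact: (raddfD (sp_right x) y z). Qed.

Lemma spZr x y k : sp x (k *: y) = k * sp x y.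
Proof. exact: linearZ_LR (sp_right x) k y. Qed.

Lemma spNr x y : sp x (- y) = - sp x y.
Proof. exact: (raddfN (sp_right x) y). Qed.

Lemma sp0l x : sp 0 x = 0.
Proof. by rewrite sp_conj sp0r conjc0. Qed.

Lemma spDl x y z : sp (x + y) z = sp x z + sp y z.
Proof. by rewrite sp_conj spDr rmorphD /= -!sp_conj. Qed.

Lemma spZl x y k : sp (k *: x) y = conjc k * sp x y.
Proof. by rewrite sp_conj spZr rmorphM /= -sp_conj. Qed.

Lemma spNl x y : sp (- x) y = - sp x y.
Proof. by rewrite sp_conj spNr rmorphN /= -sp_conj. Qed.

Lemma sp_suml x (I : Type) (r : seq I) (P : pred I) (F : I -> V) :
  sp (\sum_(i <- r | P i) F i) x = \sum_(i <- r | P i) sp (F i) x.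
Proof.
elim: r => [|y r IH]; first by rewrite !big_nil sp0l.
by rewrite !big_cons; case: (P y); rewrite ?spDl IH.
Qed.

Definition sqnorm x := complex.Re (sp x x).

Lemma spxx x : sp x x = (sqnorm x)%:C.
Proof.
move: (sp_conj x x); rewrite /sqnorm; case: (sp x x) => a b /= [] b0.
by congr (_ +i* _); lra.
Qed.

Lemma sqnorm_ge0 x : 0 <= sqnorm x.
Proof.
have [->|x0] := eqVneq x 0; first by rewrite /sqnorm sp0r.
by have := sp_pos x0; rewrite spxx ltcE /= => /andP [_ /ltW].
Qed.

Lemma sqnorm_eq0 x : sqnorm x = 0 -> x = 0.
Proof.
move=> x0; apply/eqP/negPn/negP => /sp_pos.
by rewrite spxx x0 ltcE /= ltxx andbF.
Qed.

Lemma sqnorm0 : sqnorm 0 = 0.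
Proof. by rewrite /sqnorm sp0r. Qed.

Lemma ReMr (r : R) (z : C) : complex.Re (r%:C * z) = r * complex.Re z.
Proof. by case: z => a b /=; rewrite mul0r subr0. Qed.

Lemma sqnormD x y : sqnorm (x + y) = sqnorm x + sqnorm y + 2 * complex.Re (sp x y).
Proof.
rewrite /sqnorm spDl !spDr (sp_conj x y).
case: (sp x x) (sp y y) (sp x y) => [a b] [c e] [f g] /=; lra.
Qed.

Lemma sqnormZ (r : R) x : sqnorm (r%:C *: x) = r ^+ 2 * sqnorm x.
Proof. by rewrite /sqnorm spZl spZr conjc_real mulrA -rmorphM ReMr expr2. Qed.

Lemma sqnormN x : sqnorm (- x) = sqnorm x.
Proof. by rewrite /sqnorm spNl spNr opprK. Qed.

Lemma sqnorm_sum_orthogonal M (g : nat -> V) :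
  (forall i j : nat, i != j -> sp (g i) (g j) = 0) ->
  sqnorm (\sum_(j < M) g j) = \sum_(j < M) sqnorm (g j).
Proof.
move=> orth; elim: M => [|M IH]; first by rewrite !big_ord0 sqnorm0.
have cross : \sum_(i < M) sp (g i) (g M) = 0.
  by apply: big1 => i _; apply: orth; rewrite neq_ltn ltn_ord.
by rewrite !big_ord_recr /= sqnormD IH sp_suml cross mulr0 addr0.
Qed.

Local Notation vn := (vnorm sp).

Lemma vn_ge0 x : 0 <= vn x.
Proof. exact: sqrtr_ge0. Qed.

Lemma vn_sq x : vn x ^+ 2 = sqnorm x.
Proof. exact: sqr_sqrtr (sqnorm_ge0 x). Qed.

Lemma vn_eq0 x : vn x = 0 -> x = 0.
Proof. by move=> x0; apply: sqnorm_eq0; rewrite -vn_sq x0 expr0n. Qed.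

Lemma vn0 : vn 0 = 0.
Proof. by rewrite /vnorm -/(sqnorm 0) sqnorm0 sqrtr0. Qed.

Lemma vn_le_sq x (r : R) : 0 <= r -> sqnorm x <= r ^+ 2 -> vn x <= r.
Proof.
move=> r0 xr; rewrite /vnorm -(ger0_norm r0) -sqrtr_sqr ler_sqrt //.
exact: sqr_ge0.
Qed.

Lemma vnZ (r : R) x : vn (r%:C *: x) = `|r| * vn x.
Proof. by rewrite /vnorm -!/(sqnorm _) sqnormZ sqrtrM ?sqr_ge0 // sqrtr_sqr. Qed.

Lemma vnN x : vn (- x) = vn x.
Proof. by rewrite /vnorm -!/(sqnorm _) sqnormN. Qed.

Lemma Re_sp_le x y : complex.Re (sp x y) <= vn x * vn y.
Proof.
have [x0|x0] := eqVneq (vn x) 0; first by rewrite (vn_eq0 x0) sp0l vn0 mul0r.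
have [y0|y0] := eqVneq (vn y) 0; first by rewrite (vn_eq0 y0) sp0r vn0 mulr0.
have xpos : 0 < vn x by rewrite lt_def x0 vn_ge0.
have ypos : 0 < vn y by rewrite lt_def y0 vn_ge0.
have := sqnorm_ge0 ((vn y)%:C *: x + (- vn x)%:C *: y).
rewrite sqnormD !sqnormZ spZl spZr conjc_real mulrA -rmorphM ReMr -!vn_sq.
by have := mulr_gt0 xpos ypos; nra.
Qed.

Lemma vnD x y : vn (x + y) <= vn x + vn y.
Proof.
apply: vn_le_sq; first by rewrite addr_ge0 // vn_ge0.
by rewrite sqnormD -!vn_sq; have := Re_sp_le x y; nra.
Qed.

Lemma vnB x y : vn (x - y) <= vn x + vn y.
Proof. by rewrite -(vnN y); apply: vnD. Qed.

End InnerProduct.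

Section VOA.
Variable R : realType.
Local Notation C := R[i].
Variable V : lmodType C.
Variable Y : V -> int -> V -> V.
Variable nu : V.
Hypothesis Y_linear : forall a n, linear (Y a n).
Hypothesis Y_linear_left : forall n c, linear (fun a => Y a n c).
Hypothesis V_graded : forall a, exists N f, gdecomp Y nu a N f.

Definition Y_right a n : {linear V -> V} :=
  HB.pack (Y a n) (GRing.isLinear.Build _ _ _ _ _ (Y_linear a n)).

Definition Y_left n c : {linear V -> V} :=
  HB.pack (fun a => Y a n c) (GRing.isLinear.Build _ _ _ _ _ (Y_linear_left n c)).

Lemma Y0r a n : Y a n 0 = 0.
Proof. exact: linear0 (Y_right a n). Qed.

Lemma YZr a n k c : Y a n (k *: c) = k *: Y a n c.
Proof. exact: linearZ_LR (Y_right a n) k c. Qed.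

Lemma Y_sumr a n (I : Type) (r : seq I) (P : pred I) (F : I -> V) :
  Y a n (\sum_(i <- r | P i) F i) = \sum_(i <- r | P i) Y a n (F i).
Proof. exact: (raddf_sum (Y_right a n) r P F). Qed.

Lemma Y0l n c : Y 0 n c = 0.
Proof. exact: linear0 (Y_left n c). Qed.

Lemma YZl n c k a : Y (k *: a) n c = k *: Y a n c.
Proof. exact: linearZ_LR (Y_left n c) k a. Qed.

Lemma Y_suml n c (I : Type) (r : seq I) (P : pred I) (F : I -> V) :
  Y (\sum_(i <- r | P i) F i) n c = \sum_(i <- r | P i) Y (F i) n c.
Proof. exact: (raddf_sum (Y_left n c) r P F). Qed.

Definition eigL0 (k : int) (x : V) := Y nu 1 x = k%:~R *: x.

Lemma eigL0Z k c x : eigL0 k x -> eigL0 k (c *: x).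
Proof. by rewrite /eigL0 YZr => ->; rewrite !scalerA mulrC. Qed.

Lemma scale_int_eq0 (z : int) (x : V) : z != 0 -> z%:~R *: x = 0 -> x = 0.
Proof. by move=> z0 /eqP; rewrite scaler_eq0 intr_eq0 (negbTE z0) => /eqP. Qed.

Lemma L0_shift_sum N (e : int) (w : nat -> int) (g : nat -> V) :
  (forall i, eigL0 (w i) (g i)) ->
  Y nu 1 (\sum_(i < N) g i) - e%:~R *: \sum_(i < N) g i =
  \sum_(i < N) (w i - e)%:~R *: g i.
Proof.
move=> gw; rewrite Y_sumr scaler_sumr -sumrB; apply: eq_bigr => i _.
by rewrite gw -scalerBl rmorphB.
Qed.

Lemma sum_eigL0_eq0 N (g : nat -> V) : (forall i : nat, eigL0 i (g i)) ->
  \sum_(i < N) g i = 0 -> forall i, (i < N)%N -> g i = 0.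
Proof.
elim: N g => [//|N IH] g gi sum0.
have shifted := @L0_shift_sum N.+1 N (fun i : nat => i%:Z) g gi.
rewrite sum0 Y0r scaler0 subr0 big_ord_recr /= subrr scale0r addr0 in shifted.
have low i : (i < N)%N -> g i = 0.
  move=> iN.
  apply: (@scale_int_eq0 (i%:Z - N%:Z)); first by rewrite subr_eq0 eqz_nat neq_ltn iN.
  exact: IH (fun k => eigL0Z _ (gi k)) (esym shifted) i iN.
move=> i; rewrite ltnS leq_eqVlt => /predU1P [->|]; last exact: low.
by move: sum0; rewrite big_ord_recr /= big1 ?add0r // => k _; apply: low.
Qed.

Lemma eigL0_component_eq0 M (h : nat -> V) (e : nat -> int) M' (g : nat -> V) :
  (forall i : nat, eigL0 i (g i)) -> (forall j, eigL0 (e j) (h j)) ->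
  \sum_(i < M') g i = \sum_(j < M) h j ->
  forall i : nat, (i < M')%N -> (forall j, (j < M)%N -> e j = i -> h j = 0) ->
  g i = 0.
Proof.
elim: M h e g => [|M IH] h e g gi he sum_eq i iM' hi.
  by apply: sum_eigL0_eq0 gi _ _ iM'; rewrite sum_eq big_ord0.
have hi' j : (j < M)%N -> e j = i -> h j = 0 by move=> jM; apply/hi/ltnW.
have [eMi|eMi] := eqVneq (e M) i.
  by apply: (IH h e g gi he _ i iM' hi'); rewrite sum_eq big_ord_recr /= hi ?addr0.
(* [L_0 - e M] kills [h M] and rescales the other components by nonzero factors. *)
pose g' k := (k%:Z - e M)%:~R *: g k.
pose h' j := (e j - e M)%:~R *: h j.
have sum_eq' : \sum_(k < M') g' k = \sum_(j < M) h' j.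
  rewrite -(@L0_shift_sum M' (e M) (fun k : nat => k%:Z) g gi) sum_eq.
  rewrite (@L0_shift_sum M.+1 (e M) e h he).
  by rewrite big_ord_recr /= subrr scale0r addr0.
apply: (@scale_int_eq0 (i%:Z - e M)); first by rewrite subr_eq0 eq_sym.
apply: (IH h' e g' (fun k => eigL0Z _ (gi k)) (fun j => eigL0Z _ (he j)) sum_eq' i iM').
by move=> j jM eji; rewrite /h' hi' ?scaler0.
Qed.

Lemma gdecomp_eigL0 (k : int) x N f : eigL0 k x -> gdecomp Y nu x N f ->
  forall j : nat, (j < N)%N -> j%:Z != k -> f j = 0.
Proof.
move=> xk [fj x_sum] j jN jk.
apply: (@eigL0_component_eq0 1 (fun=> x) (fun=> k) N f fj _ _ j jN) => //.
- by rewrite -x_sum big_ord1.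
- by move=> _ _ kj; rewrite kj eqxx in jk.
Qed.

Lemma eigL0_neg (k : int) x : eigL0 k x -> k < 0 -> x = 0.
Proof.
move=> xk k_neg; have [N [f xf]] := V_graded x.
rewrite (proj2 xf) big1 // => j _; apply: (gdecomp_eigL0 xk xf (ltn_ord j)).
by rewrite gt_eqF // (lt_le_trans k_neg).
Qed.

Lemma pmode_homog (d : nat) a n c : eigL0 d a ->
  pmode Y nu a n c = Y a (n + d%:Z - 1) c.
Proof.
move=> ad; rewrite /pmode; have [N [f af]] := V_graded a.
have /(epsilon_spec (inhabits (0 : V))) [M [g [ag ->]]] : exists x : V,
    exists N f, gdecomp Y nu a N f /\ x = \sum_(j < N) Y (f j) (n + (j : int) - 1) c.
  by eexists; exists N, f.
rewrite [in RHS](proj2 ag) Y_suml; apply: eq_bigr => j _.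
have [->//|jd] := eqVneq (val j) d.
by rewrite (gdecomp_eigL0 ad ag (ltn_ord j)) ?Y0l // eqz_nat.
Qed.

Hypothesis borcherds : forall a b c (p q r : int), exists N : nat,
  forall M : nat, (N <= M)%N ->
    \sum_(i < M) binomz R p i *: Y (Y a (r + (i : nat)%:Z) b) (p + q - (i : nat)%:Z) c
    = \sum_(i < M) ((-1) ^+ i * binomz R r i) *:
        (Y a (p + r - (i : nat)%:Z) (Y b (q + (i : nat)%:Z) c)
         - (-1) ^ r *: Y b (q + r - (i : nat)%:Z) (Y a (p + (i : nat)%:Z) c)).
Hypothesis L_derivative : forall a n,
  Y (Lvir Y nu (-1) a) n = fun c => - (n%:~R : C) *: Y a (n - 1) c.

Lemma Y_Lm1 a n c : Y (Y nu 0 a) n c = - n%:~R *: Y a (n - 1) c.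
Proof. by have := L_derivative a n; rewrite /Lvir => ->. Qed.

Lemma commutator_nu (d : nat) x (p q : int) c : eigL0 d x ->
  (forall i : nat, (2 <= i)%N -> binomz R p i = 0 \/ Y nu i x = 0) ->
  Y nu p (Y x q c) - Y x q (Y nu p c) =
  (p * d%:Z - (p + q))%:~R *: Y x (p + q - 1) c.
Proof.
(* Borcherds identity for [nu] with [r = 0]: only the terms [i = 0, 1] survive. *)
move=> xd vanish; have [N borch] := borcherds nu x c p q 0.
have := borch N.+2 (leq_trans (leqnSn N) (leqnSn _)).
rewrite (big_ord_first2 (F := fun i : nat => binomz R p i *: Y (Y nu (0 + i%:Z) x) (p + q - i%:Z) c)); last first.
  by move=> i /vanish [->|->]; rewrite ?scale0r // Y0l scaler0.
rewrite (big_ord_first1 (F := fun i : nat => ((-1) ^+ i * binomz R 0 i) *: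
  (Y nu (p + 0 - i%:Z) (Y x (q + i%:Z) c)
   - (-1) ^ 0 *: Y x (q + 0 - i%:Z) (Y nu (p + i%:Z) c)))); last first.
  by move=> i i1; rewrite binomz_small // mulr0 scale0r.
rewrite /= !binomz0 binomz1 expr0 expr0z mul1r !scale1r !add0r ?addr0 ?subr0.
rewrite Y_Lm1 xd YZl scalerA => <-.
by rewrite -scalerDl intrB intrM intrD; congr (_ *: _); ring.
Qed.

Lemma eigL0_mode (j : nat) (k q : int) x y : eigL0 j x -> eigL0 k y ->
  eigL0 (k + j%:Z - q - 1) (Y x q y).
Proof.
move=> xj yk; have := @commutator_nu j x 1 q y xj (fun i i2 => or_introl (binomz_small R i2)).
rewrite /eigL0 yk YZr (addrC 1 q) addrK => /eqP; rewrite subr_eq => /eqP ->.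
by rewrite -scalerDl -intrD; congr (_%:~R *: _); ring.
Qed.

Lemma commutator_L_primary (d : nat) a (m q : int) c : eigL0 d a ->
  (forall k : nat, (0 < k)%N -> Lvir Y nu k a = 0) ->
  Lvir Y nu m (Y a q c) - Y a q (Lvir Y nu m c) =
  ((m + 1) * d%:Z - (m + 1 + q))%:~R *: Y a (m + q) c.
Proof.
move=> ad prim; rewrite /Lvir (@commutator_nu d a (m + 1) q c ad); last first.
  move=> i i2; right; have i1 : (0 < i.-1)%N by case: i i2 => [|[|i]].
  by have := prim _ i1; rewrite /Lvir -PoszD addn1 prednK // (leq_trans _ i2).
by rewrite (_ : m + 1 + q - 1 = m + q) //; ring.
Qed.

Variables (vac : V) (sp : V -> V -> C) (star : V -> V) (cc : C).
Hypothesis creation : forall a, Y a (-1) vac = a /\ forall n, 0 <= n -> Y a n vac = 0.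
Hypothesis virasoro : forall (m n : int) v,
  Lvir Y nu m (Lvir Y nu n v) - Lvir Y nu n (Lvir Y nu m v) =
  (m - n)%:~R *: Lvir Y nu (m + n) v
  + (if m + n == 0 then cc / 12%:R * (m ^+ 3 - m)%:~R else 0) *: v.
Hypothesis sp_ip : inner_product sp.
Hypothesis sp_vac : sp vac vac = 1.
Hypothesis star_nu : star nu = nu.
Hypothesis pmode_adjoint : forall a b c n,
  sp b (pmode Y nu a n c) = sp (pmode Y nu (star a) (- n) b) c.

Local Notation sqnorm := (sqnorm sp).
Local Notation vn := (vnorm sp).
Local Open Scope complex_scope.

Lemma eigL0_nu : eigL0 2 nu.
Proof.
have := virasoro 0 (-2) vac; rewrite /Lvir.
rewrite (_ : (-2 : int) + 1 = -1) // (proj1 (creation nu)) (proj2 (creation nu) 1) //.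
by rewrite Y0r subr0 scale0r addr0.
Qed.

Lemma Lvir_eigL0 (k n : int) v : eigL0 k v -> eigL0 (k - n) (Lvir Y nu n v).
Proof.
move=> vk; have := eigL0_mode (n + 1) eigL0_nu vk.
by rewrite (_ : k + 2%N - (n + 1) - 1 = k - n) //; ring.
Qed.

Lemma L_adjoint b c n : sp b (Lvir Y nu n c) = sp (Lvir Y nu (- n) b) c.
Proof.
have := pmode_adjoint nu b c n; rewrite star_nu !(pmode_homog _ _ eigL0_nu).
by rewrite /Lvir -!addrA.
Qed.

Lemma sp_eigL0_eq0 (i j : int) x y : eigL0 i x -> eigL0 j y -> i != j -> sp x y = 0.
Proof.
move=> xi yj ij; have := L_adjoint x y 0.
rewrite oppr0 /Lvir /= xi yj spZr // spZl // rmorph_int => /eqP.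
rewrite -subr_eq0 -mulrBl mulf_eq0 subr_eq0 eqr_int => /orP [/eqP ji|/eqP //].
by rewrite ji eqxx in ij.
Qed.

Definition vir_c : R := 2 * sqnorm nu.

Lemma central_chargeE : cc = vir_c%:C.
Proof.
(* [<nu, nu> = <vac, L_2 L_{-2} vac> = c / 2] *)
have := virasoro 2 (-2) vac; rewrite /Lvir.
rewrite (_ : (-2 : int) + 1 = -1) // (_ : (2 : int) + 1 = 3) //.
rewrite (proj2 (creation nu) 3) // (proj2 (creation nu) 1) // (proj1 (creation nu)).
rewrite !Y0r subr0 scaler0 add0r => L2nu.
have : sp nu nu = cc / 12%:R * ((2 : int) ^+ 3 - 2)%:~R.
  have := L_adjoint vac nu 2; rewrite /Lvir (_ : (2 : int) + 1 = 3) // L2nu spZr //.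
  by rewrite sp_vac mulr1 (_ : - (2 : int) + 1 = -1) // (proj1 (creation nu)).
rewrite spxx // => nu_nu; rewrite /vir_c rmorphM /= nu_nu.
by rewrite (_ : ((2 : int) ^+ 3 - 2)%:~R = 6%:R :> C) //; field.
Qed.

Lemma vir_c_ge0 : 0 <= vir_c.
Proof. by rewrite mulr_ge0 // sqnorm_ge0. Qed.

Definition norm_defect (k m : nat) : R :=
  2 * m%:R * k%:R + vir_c / 12%:R * (m%:R ^+ 3 - m%:R).

Lemma sqnorm_L_opp (k m : nat) v : eigL0 k v ->
  sqnorm (Lvir Y nu (- m%:Z) v) = sqnorm (Lvir Y nu m v) + norm_defect k m * sqnorm v.
Proof.
move=> vk; have := virasoro m (- m%:Z) v; rewrite subrr eqxx => comm.
have : sp (Lvir Y nu (- m%:Z) v) (Lvir Y nu (- m%:Z) v) =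
    sp (Lvir Y nu m v) (Lvir Y nu m v) + (norm_defect k m)%:C * sp v v.
  rewrite -L_adjoint -(subrK (Lvir Y nu (- m%:Z) (Lvir Y nu m v)) (Lvir Y nu m _)) comm.
  rewrite !spDr // (L_adjoint v (Lvir Y nu m v) (- m%:Z)) opprK.
  rewrite {1}/Lvir add0r vk !(spZr sp_ip) central_chargeE /norm_defect.
  rewrite !(rmorphD, rmorphM, rmorphB, rmorphXn, rmorph_nat, fmorphV, rmorph1, rmorphN) /=.
  by field.
by rewrite !(spxx sp_ip) -rmorphM -rmorphD => /complexI.
Qed.

Definition Lpos_bound (k m : nat) : R :=
  3 * (k%:R + 1) ^+ 2 + vir_c * (k%:R + 1) * m%:R ^+ 2.

Lemma Lpos_bound_ge0 k m : 0 <= Lpos_bound k m.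
Proof.
have c0 := vir_c_ge0; have k0 : (0 : R) <= k%:R by [].
have : 0 <= vir_c * (k%:R + 1) by rewrite mulr_ge0 // addr_ge0.
by rewrite /Lpos_bound; nra.
Qed.

Lemma norm_defect_ge0 k m : (0 < m)%N -> 0 <= norm_defect k m.
Proof.
move=> m0; have c0 := vir_c_ge0; have m1 : 1 <= m%:R :> R by rewrite ler1n.
have k0 : (0 : R) <= k%:R by [].
have : 0 <= vir_c * (m%:R ^+ 3 - m%:R) by apply: mulr_ge0 => //; nra.
by rewrite /norm_defect; nra.
Qed.

Lemma Lpos_bound_step k m : (0 < m)%N ->
  Lpos_bound k m + norm_defect k m <= Lpos_bound (k + m) m.
Proof.
move=> m0; rewrite /Lpos_bound /norm_defect natrD.
have c0 := vir_c_ge0; have m1 : 1 <= m%:R :> R by rewrite ler1n.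
set x := k%:R; set y := m%:R; have x0 : 0 <= x by [].
have y0 : 0 <= y by apply: le_trans m1.
have := mulr_ge0 c0 (exprn_ge0 3 y0); have := mulr_ge0 c0 y0.
have := mulr_ge0 (mulr_ge0 c0 (exprn_ge0 2 y0)) x0.
nra.
Qed.

Lemma sqnorm_L_pos_le (k : nat) v : eigL0 k v -> forall m : nat, (0 < m)%N ->
  sqnorm (Lvir Y nu m v) <= Lpos_bound k m * sqnorm v.
Proof.
elim/ltn_ind: k v => k IH v vk m m0.
have := Lvir_eigL0 m vk; set w := Lvir Y nu m v => wk.
have [km|mk] := ltnP k m.
  rewrite (eigL0_neg wk) ?sqnorm0 ?mulr_ge0 ?Lpos_bound_ge0 ?sqnorm_ge0 //.
  by rewrite subr_lt0 ltz_nat.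
have kE : k = ((k - m) + m)%N by rewrite subnK.
have wk' : eigL0 (k - m)%N w by rewrite -subzn.
have k'k : (k - m < k)%N by rewrite ltn_subrL m0 (leq_trans m0 mk).
have IHw := IH _ k'k w wk' m m0.
(* [||w||^2 = <v, L_{-m} w>], and [||L_{-m} w||] is controlled at the lower weight. *)
have sw : sqnorm w <= vn v * vn (Lvir Y nu (- m%:Z) w).
  have ww : sp w w = sp v (Lvir Y nu (- m%:Z) w) by rewrite L_adjoint opprK.
  by have := Re_sp_le sp_ip v (Lvir Y nu (- m%:Z) w); rewrite -ww.
have g0 := addr_ge0 (Lpos_bound_ge0 (k - m) m) (norm_defect_ge0 (k - m) m0).
rewrite -(vn_sq sp_ip v); apply: le_trans (ler_wpM2r (exprn_ge0 2 (vn_ge0 _ _))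
  (_ : Lpos_bound (k - m) m + norm_defect (k - m) m <= _)); last first.
  by rewrite {3}kE; apply: Lpos_bound_step.
apply: le_mul_sq_of_le_mul sw _ => //; rewrite ?sqnorm_ge0 ?vn_ge0 //.
by rewrite vn_sq // (sqnorm_L_opp m wk') [X in _ <= X]mulrDl lerD2r.
Qed.

Definition L_bound (k m : nat) : R := (4 + vir_c) * (k%:R + m%:R + 1) ^+ 3.

Lemma L_bound_ge1 k m : 1 <= L_bound k m.
Proof.
have c0 := vir_c_ge0; have X1 : 1 <= k%:R + m%:R + 1 :> R by rewrite lerDr addr_ge0.
by have := exprn_ege1 3 X1; rewrite /L_bound; nra.
Qed.

Lemma L_bound_ge0 k m : 0 <= L_bound k m.
Proof. exact: le_trans ler01 (L_bound_ge1 k m). Qed.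

Lemma L_bound_homo k k' m : (k <= k')%N -> L_bound k m <= L_bound k' m.
Proof.
move=> kk'; rewrite /L_bound ler_wpM2l ?addr_ge0 ?vir_c_ge0 //.
by rewrite lerXn2r ?nnegrE ?addr_ge0 // !lerD2r ler_nat.
Qed.

Lemma Lpos_bound_defect_le k m : Lpos_bound k m + norm_defect k m <= L_bound k m.
Proof.
rewrite /Lpos_bound /norm_defect /L_bound; have c0 := vir_c_ge0.
set x := k%:R; set y := m%:R; have x0 : 0 <= x by []; have y0 : 0 <= y by [].
set X := x + y + 1; have X1 : 1 <= X by rewrite /X; lra.
have X23 : X ^+ 2 <= X ^+ 3 by apply: ler_weXn2l.
have sq : (x + 1) ^+ 2 + 2 * x * y <= X ^+ 2 by rewrite /X; nra.
have cube : (x + 1) * y ^+ 2 + y ^+ 3 <= X ^+ 3.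
  have -> : (x + 1) * y ^+ 2 + y ^+ 3 = X * y ^+ 2 by rewrite /X; ring.
  rewrite [X ^+ 3]exprS ler_wpM2l ?lerXn2r ?nnegrE //; rewrite /X; lra.
have := ler_wpM2l c0 cube; have := mulr_ge0 c0 (exprn_ge0 3 y0).
have := mulr_ge0 c0 y0; have := exprn_ge0 3 (le_trans ler01 X1).
nra.
Qed.

Lemma L_bound0 k : k%:R ^+ 2 <= L_bound k 0.
Proof.
rewrite /L_bound addr0; have c0 := vir_c_ge0; set x := k%:R; have x0 : 0 <= x by [].
have X1 : 1 <= x + 1 by lra.
have X23 : (x + 1) ^+ 2 <= (x + 1) ^+ 3 by apply: ler_weXn2l.
have := mulr_ge0 c0 (exprn_ge0 3 (le_trans ler01 X1)); nra.
Qed.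

Lemma sqnorm_L_homog_le (k : nat) v (m : int) : eigL0 k v ->
  sqnorm (Lvir Y nu m v) <= L_bound k `|m|%N * sqnorm v.
Proof.
move=> vk; case: m => [[|m]|m].
- have kC : (k%:Z)%:~R = (k%:R : R)%:C :> C by rewrite rmorph_nat.
  rewrite -[Lvir Y nu 0 v]/(Y nu 1 v) vk kC sqnormZ //; apply: ler_wpM2r; [exact: sqnorm_ge0 | exact: L_bound0].
- apply: le_trans (sqnorm_L_pos_le vk (ltn0Sn m)) _; apply: ler_wpM2r; first exact: sqnorm_ge0.
  apply: le_trans (Lpos_bound_defect_le _ _); rewrite lerDl.
  exact: norm_defect_ge0.
- rewrite NegzE (sqnorm_L_opp m.+1 vk).
  apply: le_trans (_ : (Lpos_bound k m.+1 + norm_defect k m.+1) * sqnorm v <= _).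
    by rewrite [X in _ <= X]mulrDl lerD2r; apply: sqnorm_L_pos_le.
  by apply: ler_wpM2r; [exact: sqnorm_ge0 | exact: Lpos_bound_defect_le].
Qed.

Lemma Vle_of_homog (N : int) x M (h : nat -> V) (e : nat -> int) :
  (forall j, eigL0 (e j) (h j)) -> (forall j, (j < M)%N -> N < e j -> h j = 0) ->
  x = \sum_(j < M) h j -> Vle Y nu N x.
Proof.
move=> he h0 x_sum; have [M' [g [gk x_g]]] := V_graded x.
exists M', (fun i : nat => if (i < M')%N then g i else 0); split.
  split; first by move=> j; case: ifP => _; rewrite ?Y0r ?scaler0 //; apply: gk.
  by rewrite x_g; apply: eq_bigr => i _; rewrite ltn_ord.
move=> i Ni; case: ifP => // iM'.
apply: (eigL0_component_eq0 gk he (etrans (esym x_g) x_sum) iM') => j jM eji.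
by apply: h0 => //; rewrite eji.
Qed.

Lemma Vle0 N : Vle Y nu N 0.
Proof.
exists 0%N, (fun=> 0); split=> //; split; last by rewrite big_ord0.
by move=> j; rewrite Y0r scaler0.
Qed.

Lemma Vle_add N u v : Vle Y nu N u -> Vle Y nu N v -> Vle Y nu N (u + v).
Proof.
move=> [M1 [f [[fk u_sum] f0]]] [M2 [g [[gk v_sum] g0]]].
apply: (@Vle_of_homog _ _ (M1 + M2) (fun j => if (j < M1)%N then f j else g (j - M1)%N)
          (fun j : nat => if (j < M1)%N then j%:Z else (j - M1)%N%:Z)).
- by move=> j; case: ifP => _; [apply: fk | apply: gk].
- by move=> j _; case: ifP => _; [apply: f0 | apply: g0].
- rewrite big_split_ord /= u_sum v_sum; congr (_ + _); apply: eq_bigr => i _ /=.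
    by rewrite ltn_ord.
  by rewrite ltnNge leq_addr /= addKn.
Qed.

Lemma Vle_sum N M (F : nat -> V) : (forall j, (j < M)%N -> Vle Y nu N (F j)) ->
  Vle Y nu N (\sum_(j < M) F j).
Proof.
elim: M => [|M IH] FN; first by rewrite big_ord0; apply: Vle0.
by rewrite big_ord_recr; apply: Vle_add; [apply: IH => j jM; apply/FN/ltnW | apply: FN].
Qed.

Lemma Vle_scale N (c : C) u : Vle Y nu N u -> Vle Y nu N (c *: u).
Proof.
move=> [M [f [[fk u_sum] f0]]]; exists M, (fun j => c *: f j); split.
  by split=> [j|]; [exact: (@eigL0Z j c _ (fk j)) | rewrite u_sum scaler_sumr].
by move=> j Nj; rewrite f0 ?scaler0.
Qed.

Lemma Vle_Y (j : nat) x (q N : int) u : eigL0 j x -> Vle Y nu N u ->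
  Vle Y nu (N + j%:Z - q - 1) (Y x q u).
Proof.
move=> xj [M [f [[fk u_sum] f0]]].
apply: (@Vle_of_homog _ _ M (fun k => Y x q (f k)) (fun k : nat => k%:Z + j%:Z - q - 1)).
- by move=> k; apply: (@eigL0_mode j k q x (f k) xj (fk k)).
- by move=> k _; rewrite !ltrD2r => Nk; rewrite f0 ?Y0r.
- by rewrite u_sum Y_sumr.
Qed.

Lemma Vle_pmode b n m c : Vle Y nu n c -> Vle Y nu (n - m) (pmode Y nu b m c).
Proof.
move=> cn; rewrite /pmode; have [N [f bf]] := V_graded b.
have /(epsilon_spec (inhabits (0 : V))) [M [g [bg ->]]] : exists x : V,
    exists N f, gdecomp Y nu b N f /\ x = \sum_(j < N) Y (f j) (m + (j : int) - 1) c.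
  by eexists; exists N, f.
apply: (Vle_sum (F := fun j : nat => Y (g j) (m + j%:Z - 1) c)) => j _.
have := @Vle_Y j (g j) (m + j%:Z - 1) n c (proj1 bg j) cn.
by rewrite (_ : n + j%:Z - (m + j%:Z - 1) - 1 = n - m) //; ring.
Qed.

Lemma sqnorm_L_le (N : int) u (m : int) : Vle Y nu N u ->
  sqnorm (Lvir Y nu m u) <= L_bound `|N|%N `|m|%N * sqnorm u.
Proof.
move=> [M [f [[fk u_sum] f0]]].
have orth (g : nat -> V) (s : int) : (forall j : nat, eigL0 (j%:Z - s) (g j)) ->
    forall i j : nat, i != j -> sp (g i) (g j) = 0.
  by move=> gk i j ij; apply: sp_eigL0_eq0 (gk i) (gk j) _; rewrite (inj_eq (addIr _)).
rewrite u_sum /Lvir Y_sumr (sqnorm_sum_orthogonal sp_ip _ (@orth f 0 _)); last first.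
  by move=> j; rewrite subr0; apply: fk.
rewrite (sqnorm_sum_orthogonal sp_ip _ (@orth (fun j => Lvir Y nu m (f j)) m _)); last first.
  by move=> j; apply: (@Lvir_eigL0 j m (f j) (fk j)).
rewrite mulr_sumr; apply: ler_sum => j _.
have [jN|Nj] := lerP (j%:Z) N; last by rewrite /Lvir f0 // Y0r sqnorm0 // mulr0.
apply: le_trans (sqnorm_L_homog_le m (fk j)) _.
apply: ler_wpM2r; first exact: sqnorm_ge0.
by apply: L_bound_homo; rewrite -lez_nat (le_trans jN) // abszE ler_norm.
Qed.

Lemma vn_L_le (N : int) u (m : int) : Vle Y nu N u ->
  vn (Lvir Y nu m u) <= L_bound `|N|%N `|m|%N * vn u.
Proof.
move=> uN; apply: vn_le_sq; first by rewrite mulr_ge0 ?vn_ge0 ?L_bound_ge0.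
apply: le_trans (sqnorm_L_le m uN) _; rewrite exprMn vn_sq //.
apply: ler_wpM2r; first exact: sqnorm_ge0.
by rewrite expr2 ler_peMl ?L_bound_ge0 ?L_bound_ge1.
Qed.

Lemma vn_mode_primary_le (d : nat) a w (m : int) : primary Y nu d a -> d <> 1%N ->
  m != 0 ->
  vn (pmode Y nu a (- m) w) <=
  vn (Lvir Y nu (- m) (pmode Y nu a 0 w)) + vn (pmode Y nu a 0 (Lvir Y nu (- m) w)).
Proof.
move=> [ad prim] d1 m0; rewrite !(pmode_homog _ _ ad) add0r.
set q := d%:Z - 1; set z := (- m + 1) * d%:Z - (- m + 1 + q).
have z0 : z != 0.
  rewrite /z /q (_ : _ - _ = m * (1 - d%:Z)); last by ring.
  by rewrite mulf_eq0 negb_or m0 subr_eq0 eq_sym eqz_nat; apply/eqP.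
have := vnB sp_ip (Lvir Y nu (- m) (Y a q w)) (Y a q (Lvir Y nu (- m) w)).
rewrite (@commutator_L_primary d a (- m) q w ad prim) -/z (_ : - m + d%:Z - 1 = - m + q); last first.
  by rewrite /q addrA.
rewrite -(rmorph_int (real_complex R)) vnZ //; apply: le_trans.
by rewrite ler_peMl ?vn_ge0 // -intr_norm ler1z -gtz0_ge1 normr_gt0.
Qed.

Local Open Scope ereal_scope.

Lemma opnorm_ub T n b : Vle Y nu n b -> (vn b <= 1)%R ->
  (vn (T b))%:E <= opnorm Y nu sp T n.
Proof. by move=> bn b1; apply: ereal_sup_ubound; exists b. Qed.

Lemma opnorm_le T n (M : \bar R) :
  (forall b, Vle Y nu n b -> (vn b <= 1)%R -> (vn (T b))%:E <= M) ->
  opnorm Y nu sp T n <= M.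
Proof. by move=> TM; apply: ge_ereal_sup => _ [b [bn b1] <-]; apply: TM. Qed.

Section LinearOperator.
Variable T : V -> V.
Hypothesis T_linear : linear T.

Let Tl : {linear V -> V} := HB.pack T (GRing.isLinear.Build _ _ _ _ _ T_linear).

Lemma opnorm_ge0 n : 0 <= opnorm Y nu sp T n.
Proof.
apply: le_trans (opnorm_ub T (Vle0 n) _); last by rewrite vn0.
by rewrite -[T 0%R]/(Tl 0%R) linear0 vn0.
Qed.

Lemma opnorm_bound n u r : Vle Y nu n u -> (vn u <= r)%R ->
  (vn (T u))%:E <= opnorm Y nu sp T n * r%:E.
Proof.
move=> un ur; apply: le_trans (_ : _ <= opnorm Y nu sp T n * (vn u)%:E) _; last first.
  by apply: lee_wpmul2l; rewrite ?opnorm_ge0 ?lee_fin.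
have [u0|u0] := eqVneq (vn u) 0%R.
  by rewrite (vn_eq0 sp_ip u0) -[T 0%R]/(Tl 0%R) linear0 vn0 // mule0.
have upos : (0 < vn u)%R by rewrite lt_def u0 vn_ge0.
set u' := ((vn u)^-1)%:C *: u.
have u'1 : vn u' = 1%R by rewrite vnZ // ger0_norm ?invr_ge0 ?vn_ge0 // mulVf.
have -> : T u = (vn u)%:C *: T u'.
  rewrite -[T u']/(Tl u') -linearZ_LR /u' scalerA -rmorphM mulfV //.
  by rewrite rmorph1 scale1r.
rewrite vnZ // ger0_norm ?vn_ge0 // EFinM muleC lee_wpmul2r ?lee_fin ?vn_ge0 //.
by apply: opnorm_ub; rewrite ?u'1 //; apply: Vle_scale.
Qed.

End LinearOperator.

Lemma opnorm_mode_composite_le (d : nat) a b (m n : int) (E : R) :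
  primary Y nu d a -> d <> 1%N -> (0 <= E)%R ->
  opnorm Y nu sp (pmode Y nu b m) n <= E%:E ->
  opnorm Y nu sp (fun c => pmode Y nu a (- m) (pmode Y nu b m c)) n <=
  (E * L_bound `|n - m|%N `|m|%N)%:E *
  (opnorm Y nu sp (pmode Y nu a 0%R) (n - m) + opnorm Y nu sp (pmode Y nu a 0%R) n).
Proof.
move=> ap d1 E0 bE; have [ad _] := ap.
set K := L_bound _ _.
have a0_lin : linear (pmode Y nu a 0%R).
  by move=> k x y; rewrite !(pmode_homog _ _ ad) Y_linear.
have K0 : (0 <= K)%R := L_bound_ge0 _ _.
have EK : (E <= E * K)%R by rewrite ler_peMr ?L_bound_ge1.
rewrite ge0_muleDr ?opnorm_ge0 //.
apply: opnorm_le => c cn c1; set w := pmode Y nu b m c.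
have wnm : Vle Y nu (n - m) w := Vle_pmode b m cn.
have wE : (vn w <= E)%R by rewrite -lee_fin; apply: le_trans (opnorm_ub _ cn c1) bE.
have [m0|m0] := eqVneq m 0%R.
  move: wnm; rewrite m0 oppr0 subr0 [X in _ + X]muleC => wn.
  apply: lee_paddl (opnorm_bound a0_lin wn (le_trans wE EK)).
  by rewrite mule_ge0 ?opnorm_ge0 // lee_fin mulr_ge0.
have Lw : Vle Y nu n (Lvir Y nu (- m) w).
  have := Vle_Y (- m + 1) eigL0_nu wnm.
  by rewrite (_ : n - m + 2%N - (- m + 1) - 1 = n)%R //; ring.
have a0w : Vle Y nu (n - m) (pmode Y nu a 0%R w).
  rewrite (pmode_homog _ _ ad); have := Vle_Y (0 + d%:Z - 1) ad wnm.
  by rewrite (_ : n - m + d%:Z - (0 + d%:Z - 1) - 1 = n - m)%R //; ring.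
have h1 : (vn (Lvir Y nu (- m) (pmode Y nu a 0%R w)))%:E <=
    (E * K)%:E * opnorm Y nu sp (pmode Y nu a 0%R) (n - m).
  apply: le_trans (_ : _ <= (K * vn (pmode Y nu a 0%R w))%:E) _.
    by rewrite lee_fin; have := vn_L_le (- m) a0w; rewrite abszN.
  rewrite [(K * _)%:E]EFinM (mulrC E) [(K * E)%:E]EFinM -muleA.
  by apply: lee_wpmul2l; rewrite ?lee_fin // muleC; exact (opnorm_bound a0_lin wnm wE).
have h2 : (vn (pmode Y nu a 0%R (Lvir Y nu (- m) w)))%:E <=
    (E * K)%:E * opnorm Y nu sp (pmode Y nu a 0%R) n.
  have LwKE : (vn (Lvir Y nu (- m) w) <= K * E)%R.
    by apply: le_trans (vn_L_le _ wnm) _; rewrite abszN ler_wpM2l.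
  by rewrite muleC (mulrC E); exact (opnorm_bound a0_lin Lw LwKE).
apply: le_trans (leeD h1 h2); rewrite -EFinD lee_fin.
exact: vn_mode_primary_le ap d1 m0.
Qed.

Lemma mode_product_poly_bound (d : nat) a b :
  primary Y nu d a -> d <> 1%N -> energy_bounded Y nu sp b ->
  exists B t : R, (0 <= B)%R /\ (0 <= t)%R /\
    forall m n : int,
      opnorm Y nu sp (fun c => pmode Y nu a (- m) (pmode Y nu b m c)) n <=
      (B * (1 + (`|m|%:~R : R)) `^ t * (1 + (`|n|%:~R : R)) `^ t)%:E *
      (opnorm Y nu sp (pmode Y nu a 0%R) (n - m) + opnorm Y nu sp (pmode Y nu a 0%R) n).
Proof.
move=> ap d1 [s [K [t [s0 [K0 [t0 bK]]]]]]; have c0 := vir_c_ge0.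
have a0_lin : linear (pmode Y nu a 0%R).
  by move=> k x y; rewrite !(pmode_homog _ _ ap.1) Y_linear.
exists (K * (4 + vir_c) * 8)%R, (t + s + 3)%R; split; first by rewrite !mulr_ge0 //; lra.
split=> [|m n]; first by lra.
have E0 : (0 <= K * (1 + (`|m|%:~R : R)) `^ t * (1 + (`|n|%:~R : R)) `^ s)%R.
  by rewrite !mulr_ge0 // powR_ge0.
apply: le_trans (opnorm_mode_composite_le ap d1 E0 (bK m n)) _.
apply: lee_wpmul2r; first by rewrite adde_ge0 // opnorm_ge0.
rewrite lee_fin /L_bound !natr_absz; apply: mul_powR_cube_le => //.
by rewrite -rmorphD ler_int ler_normB.
Qed.

End VOA.

Theorem mainTheorem9 (R : realType) (V : lmodType R[i])
  (Y : V -> int -> V -> V) (vac nu : V) (sp : V -> V -> R[i]) (star : V -> V)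
  (HV : simple_unitary_VOA Y vac nu sp star)
  (a b : V) (d : nat)
  (Hb : energy_bounded Y nu sp b)
  (Ha : primary Y nu d a) (Hd : d <> 1%N) :
  exists B t : R, 0 <= B /\ 0 <= t /\
    forall m n : int,
      (opnorm Y nu sp (fun c => pmode Y nu a (- m) (pmode Y nu b m c)) n <=
       (B * (1 + (`|m|%:~R : R)) `^ t * (1 + (`|n|%:~R : R)) `^ t)%:E *
       (opnorm Y nu sp (pmode Y nu a 0) (n - m) + opnorm Y nu sp (pmode Y nu a 0) n))%E.
Proof.
move: HV => [VOA _ unitary].
move: VOA => [Y_lin [Y_lin_left [_ [_ [creation [borch [[cc vir] [L_der [graded _]]]]]]]]].
move: unitary => [sp_lin [sp_conj [sp_pos [sp_vac [_ [_ [star_nu adjoint]]]]]]].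
have sp_ip : inner_product sp by [].
exact: (mode_product_poly_bound Y_lin Y_lin_left graded borch L_der creation vir sp_ip
  sp_vac star_nu adjoint Ha Hd Hb).
Qed.
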